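(* Let $\Gamma=(V,E,\ell)$ be a finite labeled simplicial graph with all labels even whose Artin group $A_\Gamma$ is of FC-type, let $\mathbb{K}$ be a field, and let $\chi:A_\Gamma\to\mathbb{Z}$ be a surjective, $\mathbb{K}$ non-resonant homomorphism. Fix $k$ and let $\bar X=(X_1,\dots,X_r)$ be a list of distinct simplices of $\mathcal{F}^f(\Gamma)$ with $k+2$ vertices and $\bar Y=(Y_1,\dots,Y_r)$ a list of distinct simplices with $k+1$ vertices. Let $\mathfrak{m}^\chi_{(\bar X,\bar Y)}\in\mathbb{K}[t^{\pm1}]$ be the $r\times r$ minor of $M^\chi_{k+1}(t)$ with rows/columns indexed by $\bar X,\bar Y$, and $\mathfrak{m}_{(\bar X,\bar Y)}\in\mathbb{K}$ the corresponding minor of $M_{k+1}$. Then: (i) $\mathfrak{m}^\chi_{(\bar X,\bar Y)}=\dfrac{\mathbf{p}_{\bar X}\mathbf{q}_{\bar X}}{\mathbf{p}_{\bar Y}\mathbf{q}_{\bar Y}}\,\mathfrak{m}_{(\bar X,\bar Y)}$; (ii) $\mathfrak{m}^\chi_{(\bar X,\bar Y)}\neq 0$ if and only if $(\bar X,\bar Y)$ is acyclic of order $r$; (iii) the largest $r$ for which some $r\times r$ minor $\mathfrak{m}^\chi_{(\bar X,\bar Y)}$ is nonzero is $r=\dim_{\mathbb{K}}\operatorname{im}\partial_{k+1}$.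
   Context: $\Gamma=(V,E,\ell)$: finite simplicial graph, labels $\ell(e)=2\tilde\ell(e)$, $\tilde\ell(e)\ge1$. $A_\Gamma=\langle g_v\ (v\in V)\mid (g_vg_w)^{\tilde\ell(e)}=(g_wg_v)^{\tilde\ell(e)},\ e=\{v,w\}\in E\rangle$. For a clique $X\subseteq V$, $W_X$ is the Coxeter group on $g_v$ ($v\in X$) with $g_v^2=1$, $(g_vg_w)^{\ell(\{v,w\})}=1$; FC-type means all such $W_X$ are finite. $\mathcal{F}^f(\Gamma)$ is the simplicial complex on $V$ whose simplices are cliques $X$ with $W_X$ finite (plus $\emptyset$). Fix a total order on $V$; for $X=\{x_0<\dots<x_k\}$, $X_{x_i}=X\setminus\{x_i\}$, $\langle X_{x_i}|X\rangle=(-1)^i$. The (augmented) flag chain complex $C^f_*(\Gamma)$ over $\mathbb{K}$ has basis $c_X$ of $C^f_k$ the simplices with $k+1$ vertices and $\partial_k c_X=\sum_{v\in X}\langle X_v|X\rangle c_{X_v}$; $M_{k+1}$ is the matrix of $\partial_{k+1}$ in these bases (entry $\langle Y|X\rangle$ if $Y\subset X$, $0$ otherwise). $m_v=\chi(g_v)$; for an edge $e=\{v,w\}$, $m_e=m_v+m_w$. $\chi$ is $\mathbb{K}$ non-resonant if $m_v\neq0$ for all $v\in V$ and there is no edge $e$ with $m_e=0$ and $\tilde\ell(e)\cdot1_{\mathbb{K}}=0$. Put $q_n(x)=(x^n-1)/(x-1)$. For a simplex $X$: $\mathbf{p}_X=\prod_{v\in X}(t^{m_v}-1)$, $\mathbf{q}_X=\prod_{e\subseteq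 X,\,e\in E}q_{\tilde\ell(e)}(t^{m_e})$; for a list $\bar X=(X_1,\dots,X_r)$, $\mathbf{p}_{\bar X}=\prod_i\mathbf{p}_{X_i}$, $\mathbf{q}_{\bar X}=\prod_i\mathbf{q}_{X_i}$. Equivariant complex: $C^\chi_k(\Gamma)$ is free over $\mathbb{K}[t^{\pm1}]$ with basis $\sigma^\chi_X$, $X$ simplex with $k+1$ vertices, and $\partial^\chi_k\sigma^\chi_X=\sum_{v\in X}\langle X_v|X\rangle(t^{m_v}-1)\big[\prod_{w\in X_v}q_{\tilde\ell(\{v,w\})}(t^{m_v+m_w})\big]\sigma^\chi_{X_v}$. $M^\chi_{k+1}(t)$ is the matrix of $\partial^\chi_{k+1}$ in these bases. Acyclic pairs: for $\bar X,\bar Y$ as in the claim, let $N(\bar X)$ be the subcomplex of $\mathcal{F}^f(\Gamma)$ consisting of all simplices with at most $k+1$ vertices together with the simplices in $\bar X$, and $N(\bar Y^c)$ the subcomplex of all simplices with at most $k$ vertices together with the simplices with $k+1$ vertices not in $\bar Y$. $(\bar X,\bar Y)$ is acyclic of order $r$ if $|\bar X|=|\bar Y|=r$ and the pair $(N(\bar X),N(\bar Y^c))$ is acyclic, i.e. $H_*(N(\bar X),N(\bar Y^c);\mathbb{K})=0$. *)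

From HB Require Import structures.
From mathcomp Require Import all_boot all_order all_algebra fraction.
From mathcomp Require Import boolp.
Set Implicit Arguments. Unset Strict Implicit. Unset Printing Implicit Defensive.
Import Order.TTheory GRing.Theory Num.Theory.
Local Open Scope ring_scope.

Notation "x %:F" := (@FracField.tofrac _ x).

(* Vertices: V = 'I_N, with the total order of the naturals.
   Graph: edge relation E (symmetric, irreflexive).
   lt v w = \tilde\ell({v,w}), the half-label; \ell(e) = 2 * lt. *)

Definition is_graph (N : nat) (E : rel 'I_N) (lt : 'I_N -> 'I_N -> nat) : Prop :=
  (forall v, ~~ E v v) /\ (forall v w, E v w = E w v) /\
  (forall v w, E v w -> lt v w = lt w v /\ (1 <= lt v w)%N).

Definition clique (N : nat) (E : rel 'I_N) (X : {set 'I_N}) : bool :=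
  [forall v in X, forall w in X, (v != w) ==> E v w].

(* The Coxeter group W_X presented as the monoid of words over X modulo the
   congruence generated by  v v = 1  and  (v w)^{\ell(v,w)} = 1  (v,w in X,
   {v,w} an edge, \ell = 2 * lt).  Since g_v^2 = 1, this monoid is the group W_X. *)
Inductive cox_eq (N : nat) (E : rel 'I_N) (lt : 'I_N -> 'I_N -> nat)
    (X : {set 'I_N}) : seq 'I_N -> seq 'I_N -> Prop :=
  | cox_refl u : cox_eq E lt X u u
  | cox_sym u u' : cox_eq E lt X u u' -> cox_eq E lt X u' u
  | cox_trans u u' u'' : cox_eq E lt X u u' -> cox_eq E lt X u' u'' ->
      cox_eq E lt X u u''
  | cox_sq a b v : v \in X -> cox_eq E lt X (a ++ [:: v; v] ++ b) (a ++ b)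
  | cox_braid a b v w : v \in X -> w \in X -> E v w ->
      cox_eq E lt X (a ++ flatten (nseq (2 * lt v w) [:: v; w]) ++ b) (a ++ b).

Definition cox_finite (N : nat) (E : rel 'I_N) (lt : 'I_N -> 'I_N -> nat)
    (X : {set 'I_N}) : Prop :=
  exists s : seq (seq 'I_N), forall u : seq 'I_N, all (fun x => x \in X) u ->
    exists2 u', u' \in s & cox_eq E lt X u u'.

Definition FC_type (N : nat) (E : rel 'I_N) (lt : 'I_N -> 'I_N -> nat) : Prop :=
  forall X : {set 'I_N}, clique E X -> cox_finite E lt X.

(* Simplices of F^f(Gamma) (including the empty simplex). *)
Definition simplex (N : nat) (E : rel 'I_N) (lt : 'I_N -> 'I_N -> nat)
    (X : {set 'I_N}) : bool :=
  clique E X && `[< cox_finite E lt X >].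

(* chi : A_Gamma -> Z is given by m v = chi(g_v); every m : V -> int defines a
   homomorphism (the relations of A_Gamma hold in the abelian group Z). *)
Definition chi_surjective (N : nat) (m : 'I_N -> int) : Prop :=
  forall z : int, exists c : 'I_N -> int, \sum_v c v * m v = z.

Definition non_resonant (K : fieldType) (N : nat) (E : rel 'I_N)
    (lt : 'I_N -> 'I_N -> nat) (m : 'I_N -> int) : Prop :=
  (forall v, m v != 0) /\
  ~ (exists v w, [/\ E v w, m v + m w = 0 & (lt v w)%:R = 0 :> K]).

(* Laurent polynomials K[t^{+-1}] are computed inside the field of rational
   functions {fraction {poly K}}; t is the indeterminate. *)
Definition tt (K : fieldType) : {fraction {poly K}} := ('X)%:F.

(* q_n(x) = (x^n - 1)/(x - 1) = 1 + x + ... + x^(n-1) (as a polynomial). *)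
Definition qn (R : nzRingType) (n : nat) (x : R) : R := \sum_(i < n) x ^+ i.

Definition removed (N : nat) (Y X : {set 'I_N}) : option 'I_N :=
  [pick v in X | Y == X :\ v].

(* <X_v | X> = (-1)^i where v = x_i, i.e. i = #{y in X | y < v} *)
Definition sgn (R : nzRingType) (N : nat) (X : {set 'I_N}) (v : 'I_N) : R :=
  (-1) ^+ #|[set y in X | (y < v)%N]|.

Definition incK (K : fieldType) (N : nat) (Y X : {set 'I_N}) : K :=
  if removed Y X is Some v then sgn K X v else 0.

(* Entry of the equivariant boundary matrix: coefficient of sigma_Y in
   d^chi sigma_X. *)
Definition incchi (K : fieldType) (N : nat) (lt : 'I_N -> 'I_N -> nat)
    (m : 'I_N -> int) (Y X : {set 'I_N}) : {fraction {poly K}} :=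
  if removed Y X is Some v then
    sgn _ X v * (tt K ^ m v - 1) *
    \prod_(w in Y) qn (lt v w) (tt K ^ (m v + m w))
  else 0.

Definition pX (K : fieldType) (N : nat) (m : 'I_N -> int) (X : {set 'I_N})
  : {fraction {poly K}} := \prod_(v in X) (tt K ^ m v - 1).

Definition qX (K : fieldType) (N : nat) (E : rel 'I_N)
    (lt : 'I_N -> 'I_N -> nat) (m : 'I_N -> int) (X : {set 'I_N})
  : {fraction {poly K}} :=
  \prod_(v in X) \prod_(w in X | (v < w)%N && E v w)
     qn (lt v w) (tt K ^ (m v + m w)).

Definition minorK (K : fieldType) (N r : nat) (Xs Ys : 'I_r -> {set 'I_N}) : K :=
  \det (\matrix_(i < r, j < r) incK K (Ys j) (Xs i)).

Definition minorchi (K : fieldType) (N : nat) (lt : 'I_N -> 'I_N -> nat)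
    (m : 'I_N -> int) (r : nat) (Xs Ys : 'I_r -> {set 'I_N})
  : {fraction {poly K}} :=
  \det (\matrix_(i < r, j < r) incchi K lt m (Ys j) (Xs i)).

(* Relative chain complex of a pair (N1, N2) of subcomplexes (N2 inside N1),
   augmented (the empty simplex is a 0-vertex cell).  cells d = simplices of
   N1 not in N2 with d vertices. *)
Definition cells (N : nat) (N1 N2 : pred {set 'I_N}) (d : nat)
  : {set {set 'I_N}} := [set X | N1 X && ~~ N2 X & #|X| == d].

(* Matrix of the boundary from d+1-vertex cells to d-vertex cells
   (row-vector convention: row = source cell, column = target cell). *)
Definition bdmx (K : fieldType) (N : nat) (N1 N2 : pred {set 'I_N}) (d : nat)
  : 'M[K]_(#|cells N1 N2 d.+1|, #|cells N1 N2 d|) :=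
  \matrix_(i, j) incK K (enum_val j) (enum_val i).

(* H_*(N1, N2; K) = 0 : every cycle is a boundary in each degree. *)
Definition acyclic_pair (K : fieldType) (N : nat) (N1 N2 : pred {set 'I_N})
  : Prop :=
  (1%:M <= bdmx K N1 N2 0)%MS /\
  (forall d, (kermx (bdmx K N1 N2 d) <= bdmx K N1 N2 d.+1)%MS).

(* With n = k+1: Xs are simplices with n+1 vertices, Ys with n vertices. *)
Definition NX (N : nat) (E : rel 'I_N) (lt : 'I_N -> 'I_N -> nat) (n r : nat)
    (Xs : 'I_r -> {set 'I_N}) : pred {set 'I_N} :=
  fun S => simplex E lt S && ((#|S| <= n)%N || [exists i, Xs i == S]).

Definition NYc (N : nat) (E : rel 'I_N) (lt : 'I_N -> 'I_N -> nat) (n r : nat)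
    (Ys : 'I_r -> {set 'I_N}) : pred {set 'I_N} :=
  fun S => simplex E lt S &&
    ((#|S| < n)%N || ((#|S| == n) && ~~ [exists i, Ys i == S])).

Definition acyclic_of_order (K : fieldType) (N : nat) (E : rel 'I_N)
    (lt : 'I_N -> 'I_N -> nat) (n r : nat) (Xs Ys : 'I_r -> {set 'I_N}) : Prop :=
  acyclic_pair K (NX E lt n Xs) (NYc E lt n Ys).

Definition good_lists (N : nat) (E : rel 'I_N) (lt : 'I_N -> 'I_N -> nat)
    (n r : nat) (Xs Ys : 'I_r -> {set 'I_N}) : Prop :=
  [/\ injective Xs, injective Ys,
      (forall i, simplex E lt (Xs i) /\ #|Xs i| = n.+1) &
      (forall i, simplex E lt (Ys i) /\ #|Ys i| = n)].

(* The flag boundary matrix M_{k+1} (k+1 = n) of C^f_*(Gamma): pair (F^f, empty). *)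
Definition Mflag (K : fieldType) (N : nat) (E : rel 'I_N)
    (lt : 'I_N -> 'I_N -> nat) (n : nat) :=
  bdmx K (simplex E lt) pred0 n.

From HB Require Import structures.
From mathcomp Require Import all_boot all_order all_algebra fraction.
Import GRing.Theory.
Local Open Scope ring_scope.

Set Implicit Arguments.
Unset Strict Implicit.
Unset Printing Implicit Defensive.

(* Every entry of the equivariant boundary matrix is the flag entry <Y|X>
   rescaled by p_X q_X / (p_Y q_Y): removing v from X removes the factor
   t^{m_v} - 1 of p_X and the factors q(t^{m_v + m_w}), w in X \ v, of q_X.
   These weights are nonzero by non-resonance, so a minor of M^chi is a
   nonzero multiple of the corresponding minor of M, and nonsingularity of a
   minor only depends on the flag complex.  For the pair (N(X), N(Y^c)) the
   relative chain complex is concentrated in two degrees with bases X and Y,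
   so it is acyclic iff its only boundary matrix -- the (X, Y) submatrix of
   M_{k+1} -- is invertible.  Finally the rank of a matrix is the largest size
   of one of its nonsingular square submatrices. *)

Lemma det_scale_rows_cols (R : comNzRingType) r (a b : 'I_r -> R) (A : 'M[R]_r) :
  \det (\matrix_(i, j) (a i * b j * A i j)) = (\prod_i a i) * (\prod_i b i) * \det A.
Proof.
have -> : \matrix_(i, j) (a i * b j * A i j) =
    diag_mx (\row_i a i) *m A *m diag_mx (\row_i b i).
  by apply/matrixP => i j; rewrite mul_mx_diag mul_diag_mx !mxE mulrAC.
rewrite !det_mulmx !det_diag mulrAC.
by congr (_ * _ * _); apply: eq_bigr => i _; rewrite mxE.
Qed.

Section SubmatrixRank.
Variable K : fieldType.

Lemma mxrank_mxsub_leq p q p' q' (f : 'I_p' -> 'I_p) (g : 'I_q' -> 'I_q)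
    (A : 'M[K]_(p, q)) :
  (\rank (mxsub f g A) <= \rank A)%N.
Proof.
rewrite mxsubrc rowsubE; apply: leq_trans (mxrankM_maxr _ _) _.
by rewrite -mxrank_tr trmx_mxsub rowsubE -[leqRHS]mxrank_tr mxrankM_maxr.
Qed.

Lemma mxrank_rowsub_inj p p' q (f : 'I_p' -> 'I_p) (A : 'M[K]_(p, q)) :
  injective f -> (p <= p')%N -> \rank (rowsub f A) = \rank A.
Proof.
move=> f_inj le_pp'.
by rewrite (eqmx_rowsub f (g := id) f_inj le_pp' (fun _ => erefl)) mxsub_id.
Qed.

Lemma mxrank_mxsub_inj p q p' q' (f : 'I_p' -> 'I_p) (g : 'I_q' -> 'I_q)
    (A : 'M[K]_(p, q)) :
  injective f -> injective g -> (p <= p')%N -> (q <= q')%N ->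
  \rank (mxsub f g A) = \rank A.
Proof.
move=> f_inj g_inj le_pp' le_qq'.
rewrite mxsubcr -mxrank_tr trmx_mxsub mxrank_rowsub_inj //.
by rewrite mxrank_tr mxrank_rowsub_inj.
Qed.

Lemma exists_unit_mxsub p q (A : 'M[K]_(p, q)) :
  exists (f : 'I_(\rank A) -> 'I_p) (g : 'I_(\rank A) -> 'I_q),
    [/\ injective f, injective g & mxsub f g A \in unitmx].
Proof.
pose B := rowsub (maxrankfun A) A.
have B_full : row_full B^T by rewrite /row_full mxrank_tr /B eq_maxrowsub.
exists (maxrankfun A), (fullrankfun B_full); split.
- exact: maxrankfun_inj.
- exact: fullrankfun_inj.
have -> : mxsub (maxrankfun A) (fullrankfun B_full) A =
    (rowsub (fullrankfun B_full) B^T)^T.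
  by apply/matrixP => i j; rewrite !mxE.
by rewrite unitmx_tr fullrowsub_unit.
Qed.

Lemma norows_mx_eq0 p q (A : 'M[K]_(p, q)) : p = 0%N -> A = 0.
Proof. by move=> p0; subst p; apply: flatmx0. Qed.

Lemma nocols_mx_eq0 p q (A : 'M[K]_(p, q)) : q = 0%N -> A = 0.
Proof. by move=> q0; subst q; apply: thinmx0. Qed.

Lemma nocols_row_full p q (A : 'M[K]_(p, q)) : q = 0%N -> row_full A.
Proof. by move=> q0; subst q; rewrite /row_full eqn_leq rank_leq_col. Qed.

Lemma acyclic_pair_two_degreesP N (N1 N2 : pred {set 'I_N}) n :
  (forall d, d != n -> d != n.+1 -> #|cells N1 N2 d| = 0%N) ->
  acyclic_pair K N1 N2 <-> row_free (bdmx K N1 N2 n) && row_full (bdmx K N1 N2 n).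
Proof.
move=> cells0; split.
  case=> bd0_full bd_exact; apply/andP; split.
    have := bd_exact n; rewrite (norows_mx_eq0 (bdmx K N1 N2 n.+1)); last first.
      by apply: cells0; rewrite ?gtn_eqF // ltnW.
    by move/submx0null/eqP; rewrite kermx_eq0.
  case: n cells0 bd_exact bd0_full => [|d] cells0 bd_exact; first by rewrite sub1mx.
  have := bd_exact d; rewrite (nocols_mx_eq0 (bdmx K N1 N2 d)); last first.
    by apply: cells0; rewrite ?ltn_eqF // ltnW.
  by rewrite kermx0 sub1mx.
case/andP => bd_free bd_full; split.
  have [n0|n_neq0] := eqVneq n 0%N; first by subst n; rewrite sub1mx.
  by rewrite sub1mx nocols_row_full //; apply: cells0; rewrite // eq_sym.
move=> d; have [d1n|d1_neq] := eqVneq d.+1 n.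
  rewrite (nocols_mx_eq0 (bdmx K N1 N2 d)); last by apply: cells0; rewrite -d1n ltn_eqF.
  by rewrite kermx0 sub1mx d1n.
have [->|d_neq] := eqVneq d n.
  by move: bd_free; rewrite -kermx_eq0 => /eqP ->; apply: sub0mx.
by rewrite (norows_mx_eq0 (kermx _)) ?sub0mx // cells0.
Qed.

End SubmatrixRank.

Definition bd_submx (K : fieldType) (N r r' : nat)
    (Xs : 'I_r -> {set 'I_N}) (Ys : 'I_r' -> {set 'I_N}) : 'M[K]_(r, r') :=
  \matrix_(i, j) incK K (Ys j) (Xs i).

Lemma inj_enum_rank_in (T : finType) (A : {set T}) r (Xs : 'I_r -> T)
    (XsA : forall i, Xs i \in A) :
  injective Xs -> injective (fun i => enum_rank_in (XsA i) (Xs i)).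
Proof.
by move=> Xs_inj i j /(congr1 enum_val); rewrite !enum_rankK_in // => /Xs_inj.
Qed.

Lemma bd_submx_mxsub (K : fieldType) N (N1 N2 : pred {set 'I_N}) d r r'
    (Xs : 'I_r -> {set 'I_N}) (Ys : 'I_r' -> {set 'I_N})
    (XsC : forall i, Xs i \in cells N1 N2 d.+1)
    (YsC : forall j, Ys j \in cells N1 N2 d) :
  bd_submx K Xs Ys = mxsub (fun i => enum_rank_in (XsC i) (Xs i))
                           (fun j => enum_rank_in (YsC j) (Ys j)) (bdmx K N1 N2 d).
Proof. by apply/matrixP => i j; rewrite !mxE !enum_rankK_in ?XsC ?YsC. Qed.

Section AcyclicPair.
Variables (N : nat) (E : rel 'I_N) (lt : 'I_N -> 'I_N -> nat) (n r : nat).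
Variables Xs Ys : 'I_r -> {set 'I_N}.
Hypothesis lists : good_lists E lt n Xs Ys.
Local Notation N1 := (NX E lt n Xs).
Local Notation N2 := (NYc E lt n Ys).

Lemma in_cells_pair d S : (S \in cells N1 N2 d) =
  ((d == n.+1) && [exists i, Xs i == S]) || ((d == n) && [exists i, Ys i == S]).
Proof.
case: lists => _ _ XsS YsS; rewrite /cells inE /NX /NYc.
have Sn_ltn : (n.+1 < n)%N = false by rewrite ltnNge ltnW.
have Sn_eqn : (n.+1 == n) = false by rewrite gtn_eqF.
case: existsP => [[i /eqP <-]|_].
  have notY : [exists j, Ys j == Xs i] = false.
    apply/existsP => -[j /eqP Yj]; move: (YsS j).2.
    by rewrite Yj (XsS i).2 => /esym/n_Sn.
  have [-> ->] := XsS i.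
  by rewrite orbT Sn_ltn Sn_eqn notY /= andbT andbF orbF eq_sym.
case: existsP => [[i /eqP <-]|_].
  by have [-> ->] := YsS i; rewrite leqnn ltnn eqxx /= andbF andbT eq_sym.
rewrite !andbF /= orbF andbT; case: (simplex E lt S) => //=.
by rewrite orbC -leq_eqVlt andbN.
Qed.

Lemma cells_pair_succ : cells N1 N2 n.+1 = [set Xs i | i : 'I_r].
Proof.
apply/setP => S; rewrite in_cells_pair eqxx (gtn_eqF (ltnSn n)) /= orbF.
by apply/existsP/imsetP => [[i /eqP <-]|[i _ ->]]; exists i.
Qed.

Lemma cells_pair : cells N1 N2 n = [set Ys i | i : 'I_r].
Proof.
apply/setP => S; rewrite in_cells_pair eqxx (ltn_eqF (ltnSn n)) /=.
by apply/existsP/imsetP => [[i /eqP <-]|[i _ ->]]; exists i.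
Qed.

Lemma card_cells_pair_succ : #|cells N1 N2 n.+1| = r.
Proof.
by case: lists => Xs_inj _ _ _; rewrite cells_pair_succ card_imset // card_ord.
Qed.

Lemma card_cells_pair : #|cells N1 N2 n| = r.
Proof.
by case: lists => _ Ys_inj _ _; rewrite cells_pair card_imset // card_ord.
Qed.

Lemma cells_pair_eq0 d : d != n -> d != n.+1 -> #|cells N1 N2 d| = 0%N.
Proof.
move=> /negbTE dn /negbTE dn1.
by apply: eq_card0 => S; rewrite in_cells_pair dn dn1.
Qed.

Lemma acyclic_of_order_unitmx (K : fieldType) :
  acyclic_of_order K E lt n Xs Ys <-> bd_submx K Xs Ys \in unitmx.
Proof.
case: (lists) => Xs_inj Ys_inj _ _.
have XsC i : Xs i \in cells N1 N2 n.+1 by rewrite cells_pair_succ imset_f.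
have YsC j : Ys j \in cells N1 N2 n by rewrite cells_pair imset_f.
rewrite /acyclic_of_order (acyclic_pair_two_degreesP K (n := n) cells_pair_eq0).
rewrite -row_free_unit /row_free (bd_submx_mxsub K XsC YsC).
rewrite mxrank_mxsub_inj; first last.
- by rewrite card_cells_pair.
- by rewrite card_cells_pair_succ.
- exact: inj_enum_rank_in.
- exact: inj_enum_rank_in.
rewrite /row_free /row_full; move: (\rank _) => k.
by rewrite card_cells_pair_succ card_cells_pair andbb.
Qed.

End AcyclicPair.

Section LaurentMonomials.
Variable K : fieldType.

Lemma tt_expz_neq1 (z : int) : z != 0 -> tt K ^ z != 1.
Proof.
have ttXn_neq1 n : (0 < n)%N -> tt K ^+ n != 1.
  move=> n_gt0; rewrite /tt -rmorphXn -(rmorph1 (@FracField.tofrac _)) tofrac_eq.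
  apply/eqP => /(congr1 (fun p : {poly K} => size p)); rewrite size_polyXn size_poly1.
  by case: n n_gt0.
case: z => n; first by move=> n_neq0; apply: ttXn_neq1; case: n n_neq0.
by move=> _; rewrite /exprz invr_eq1; apply: ttXn_neq1.
Qed.

(* For z != 0 use (x - 1) q_l(x) = x^l - 1; for z = 0, q_l(1) = l. *)
Lemma qn_tt_expz_neq0 (l : nat) (z : int) : (0 < l)%N ->
  (z = 0 -> l%:R != 0 :> K) -> qn l (tt K ^ z) != 0.
Proof.
move=> l_gt0 z0_l_neq0; have [z0|z_neq0] := eqVneq z 0.
  rewrite z0 expr0z /qn (eq_bigr (fun _ => 1)) => [|i _]; last by rewrite expr1n.
  rewrite sumr_const card_ord -(rmorph_nat (@FracField.tofrac _)) -(rmorph_nat polyC).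
  by rewrite tofrac_eq0 polyC_eq0; exact: z0_l_neq0.
have zl_neq0 : z * l%:Z != 0 by rewrite mulf_eq0 negb_or z_neq0 -lt0n.
apply: contra (tt_expz_neq1 zl_neq0) => /eqP qn_eq0.
by rewrite -subr_eq0 -exprz_exp subrX1 -/(qn _ _) qn_eq0 mulr0.
Qed.

End LaurentMonomials.

Lemma clique_edge (N : nat) (E : rel 'I_N) (X : {set 'I_N}) v w :
  clique E X -> v \in X -> w \in X -> v != w -> E v w.
Proof.
by move=> /forall_inP cX vX wX; move: (cX v vX) => /forall_inP/(_ w wX)/implyP.
Qed.

Section FaceWeights.
Variables (K : fieldType) (N : nat) (E : rel 'I_N) (lt : 'I_N -> 'I_N -> nat).
Variable m : 'I_N -> int.
Hypotheses (graphE : is_graph E lt) (nonres : non_resonant K E lt m).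
Local Notation F := {fraction {poly K}}.
Local Notation qe v w := (qn (lt v w) (tt K ^ (m v + m w))).

Definition pqX (X : {set 'I_N}) : F := pX K m X * qX K E lt m X.

Lemma qe_sym v w : E v w -> qe v w = qe w v.
Proof. by case: graphE => _ [_ ltE] /ltE[-> _]; rewrite addrC. Qed.

Lemma qe_neq0 v w : E v w -> qe v w != 0.
Proof.
case: graphE nonres => _ [_ ltE] [_ no_resonance] Evw.
apply: qn_tt_expz_neq0 => [|mvw0]; first by case: (ltE _ _ Evw).
by apply/negP => /eqP lt0; apply: no_resonance; exists v, w.
Qed.

Lemma pqX_neq0 X : pqX X != 0.
Proof.
case: nonres => m_neq0 _; rewrite mulf_neq0 //.
  by apply/prodf_neq0 => v _; rewrite subr_eq0 tt_expz_neq1.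
by apply/prodf_neq0 => v _; apply/prodf_neq0 => w /andP[_ /andP[_ /qe_neq0]].
Qed.

Lemma qX_clique X : clique E X ->
  qX K E lt m X = \prod_(v in X) \prod_(w in X) (if (v < w)%N then qe v w else 1).
Proof.
move=> cX; apply: eq_bigr => v vX; rewrite big_mkcondr; apply: eq_bigr => w wX.
by case: ltngtP => //= vw; rewrite (clique_edge cX) // neq_ltn vw.
Qed.

Lemma qX_setD1 X v : clique E X -> v \in X ->
  qX K E lt m X = \prod_(w in X :\ v) qe v w * qX K E lt m (X :\ v).
Proof.
move=> cX vX; have cXv : clique E (X :\ v).
  apply/forall_inP => a /setD1P[_ aX]; apply/forall_inP => b /setD1P[_ bX].
  by apply/implyP; apply: clique_edge cX aX bX.
have row_setD1 (a : 'I_N) : \prod_(w in X) (if (a < w)%N then qe a w else 1) =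
    (if (a < v)%N then qe a v else 1) *
    \prod_(w in X :\ v) (if (a < w)%N then qe a w else 1).
  by rewrite (big_setD1 v vX).
rewrite !qX_clique // (big_setD1 v vX) /= row_setD1 ltnn mul1r.
rewrite (eq_bigr _ (fun a _ => row_setD1 a)) big_split /= mulrA; congr (_ * _).
rewrite -big_split /=; apply: eq_bigr => w /setD1P[wv wX].
have Evw : E v w by rewrite (clique_edge cX) // eq_sym.
case: ltngtP => [_|_|/val_inj vw]; first by rewrite mulr1.
  by rewrite mul1r (qe_sym Evw).
by rewrite vw eqxx in wv.
Qed.

Lemma pqX_setD1 X v : clique E X -> v \in X ->
  pqX X = (tt K ^ m v - 1) * \prod_(w in X :\ v) qe v w * pqX (X :\ v).
Proof.
move=> cX vX; rewrite /pqX /pX (big_setD1 v vX) (qX_setD1 cX vX) /=.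
by rewrite !mulrA; congr (_ * _); rewrite -!mulrA; congr (_ * _); rewrite mulrC.
Qed.

Lemma incchi_pqX X Y : clique E X ->
  incchi K lt m Y X = pqX X / pqX Y * ((incK K Y X)%:P)%:F.
Proof.
move=> cX; rewrite /incchi /incK /removed.
case: pickP => [v /andP[vX /eqP ->]|_]; last by rewrite polyC0 tofrac0 mulr0.
rewrite (pqX_setD1 cX vX) mulfK ?pqX_neq0 // /sgn !rmorphXn !rmorphN !rmorph1.
by rewrite -mulrA mulrC.
Qed.

Lemma minorchi_pqX r (Xs Ys : 'I_r -> {set 'I_N}) : (forall i, clique E (Xs i)) ->
  minorchi K lt m Xs Ys =
    (\prod_i pqX (Xs i)) / (\prod_i pqX (Ys i)) * ((minorK K Xs Ys)%:P)%:F.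
Proof.
move=> cXs; have -> : ((minorK K Xs Ys)%:P)%:F =
    \det (map_mx ((@FracField.tofrac _) \o polyC) (bd_submx K Xs Ys)).
  by rewrite det_map_mx.
rewrite -prodfV -det_scale_rows_cols; congr (\det _).
by apply/matrixP => i j; rewrite !mxE incchi_pqX.
Qed.

Lemma minorchi_neq0 r (Xs Ys : 'I_r -> {set 'I_N}) : (forall i, clique E (Xs i)) ->
  (minorchi K lt m Xs Ys != 0) = (bd_submx K Xs Ys \in unitmx).
Proof.
move=> cXs; have weight_neq0 : (\prod_i pqX (Xs i)) / (\prod_i pqX (Ys i)) != 0.
  by rewrite mulf_neq0 ?invr_eq0 //; apply/prodf_neq0 => i _; apply: pqX_neq0.
rewrite minorchi_pqX // mulf_eq0 negb_or weight_neq0.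
by rewrite tofrac_eq0 polyC_eq0 unitmxE unitfE.
Qed.

End FaceWeights.

Section FlagRank.
Variables (K : fieldType) (N : nat) (E : rel 'I_N) (lt : 'I_N -> 'I_N -> nat).
Variables (m : 'I_N -> int) (n : nat).
Hypotheses (graphE : is_graph E lt) (nonres : non_resonant K E lt m).

Lemma flag_cellsP d S :
  reflect (simplex E lt S /\ #|S| = d) (S \in cells (simplex E lt) pred0 d).
Proof. by rewrite inE andbT; apply: (iffP andP) => -[-> /eqP]. Qed.

Lemma good_lists_clique r (Xs Ys : 'I_r -> {set 'I_N}) :
  good_lists E lt n Xs Ys -> forall i, clique E (Xs i).
Proof. by case=> _ _ XsS _ i; case/andP: (XsS i).1. Qed.

Lemma minorchi_neq0_rank_attained :
  exists Xs Ys : 'I_(\rank (Mflag K E lt n)) -> {set 'I_N},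
    good_lists E lt n Xs Ys /\ minorchi K lt m Xs Ys != 0.
Proof.
have [f [g [f_inj g_inj fg_unit]]] := exists_unit_mxsub (Mflag K E lt n).
have lists : good_lists E lt n (enum_val \o f) (enum_val \o g).
  split=> [i j /enum_val_inj/f_inj | i j /enum_val_inj/g_inj | i | j] //.
    exact/flag_cellsP/enum_valP.
  exact/flag_cellsP/enum_valP.
exists (enum_val \o f), (enum_val \o g); split=> //.
rewrite (minorchi_neq0 graphE nonres _ (good_lists_clique lists)).
suff -> : bd_submx K (enum_val \o f) (enum_val \o g) = mxsub f g (Mflag K E lt n) by [].
by apply/matrixP => i j; rewrite !mxE.
Qed.

Lemma minorchi_neq0_rank_leq r (Xs Ys : 'I_r -> {set 'I_N}) :
  good_lists E lt n Xs Ys -> minorchi K lt m Xs Ys != 0 ->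
  (r <= \rank (Mflag K E lt n))%N.
Proof.
move=> lists; rewrite (minorchi_neq0 graphE nonres _ (good_lists_clique lists)).
move=> /mxrank_unit <-; case: lists => _ _ XsS YsS.
have XsC i : Xs i \in cells (simplex E lt) pred0 n.+1 by apply/flag_cellsP.
have YsC j : Ys j \in cells (simplex E lt) pred0 n by apply/flag_cellsP.
by rewrite (bd_submx_mxsub K XsC YsC) mxrank_mxsub_leq.
Qed.

End FlagRank.

Theorem proposition3p8 (K : fieldType) (N : nat) (E : rel 'I_N)
    (lt : 'I_N -> 'I_N -> nat) (m : 'I_N -> int) (n : nat) :
  is_graph E lt -> FC_type E lt ->
  chi_surjective m -> non_resonant K E lt m ->
  (forall (r : nat) (Xs Ys : 'I_r -> {set 'I_N}),
     good_lists E lt n Xs Ys ->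
     [/\ minorchi K lt m Xs Ys =
           (\prod_(i < r) (pX K m (Xs i) * qX K E lt m (Xs i))) /
           (\prod_(i < r) (pX K m (Ys i) * qX K E lt m (Ys i))) *
           ((minorK K Xs Ys)%:P)%:F
       & minorchi K lt m Xs Ys != 0 <-> acyclic_of_order K E lt n Xs Ys]) /\
  (exists (Xs Ys : 'I_(\rank (Mflag K E lt n)) -> {set 'I_N}),
     good_lists E lt n Xs Ys /\ minorchi K lt m Xs Ys != 0) /\
  (forall (r : nat) (Xs Ys : 'I_r -> {set 'I_N}),
     good_lists E lt n Xs Ys -> minorchi K lt m Xs Ys != 0 ->
     (r <= \rank (Mflag K E lt n))%N).
Proof.
move=> graphE _ _ nonres; split; last split.
- move=> r Xs Ys lists; have cXs := good_lists_clique lists.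
  split; first exact: minorchi_pqX.
  rewrite (minorchi_neq0 graphE nonres Ys cXs).
  exact: iff_sym (acyclic_of_order_unitmx lists K).
- exact: minorchi_neq0_rank_attained.
- exact: minorchi_neq0_rank_leq.
Qed.
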